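(* Let $\mathcal{P}\subset\mathbb{R}^d$ be a finite set of item vectors, $\bm{q}\in\mathbb{R}^d$, $k>1$ an integer, $\lambda\in[0,1]$, $\mu>0$, and assume $\langle\bm{x},\bm{y}\rangle\ge0$ for all $\bm{x},\bm{y}\in\mathcal{P}\cup\{\bm{q}\}$. Let $\mathcal{N}\subseteq\mathcal{P}$ be nonempty with center $\bm{c}=\frac{1}{|\mathcal{N}|}\sum_{\bm{p}\in\mathcal{N}}\bm{p}$, and for $\bm{p}\in\mathcal{N}$ let $r_{\bm{p}}=\|\bm{p}-\bm{c}\|$. Then for every $\bm{p}\in\mathcal{N}$, every $\mathcal{S}\subseteq\mathcal{P}$, and $\Delta_f$ equal to either $\Delta_{f_{avg}}$ or $\Delta_{f_{max}}$, $$\Delta_f(\bm{p},\mathcal{S})\le\tfrac{\lambda}{k}\big(\langle\bm{q},\bm{c}\rangle+r_{\bm{p}}\|\bm{q}\|\big).$$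
   Context: $\Delta_{f_{avg}}(\bm{p},\mathcal{S}) = \frac{\lambda}{k}\langle\bm{p},\bm{q}\rangle - \frac{2\mu(1-\lambda)}{k(k-1)}\sum_{\bm{p}'\in\mathcal{S}}\langle\bm{p},\bm{p}'\rangle$ and $\Delta_{f_{max}}(\bm{p},\mathcal{S}) = \frac{\lambda}{k}\langle\bm{p},\bm{q}\rangle - \mu(1-\lambda)\big(\max_{\bm{p}_x\ne\bm{p}_y\in\mathcal{S}\cup\{\bm{p}\}}\langle\bm{p}_x,\bm{p}_y\rangle - \max_{\bm{p}_x\ne\bm{p}_y\in\mathcal{S}}\langle\bm{p}_x,\bm{p}_y\rangle\big)$, where a maximum over an empty collection of pairs is taken to be $0$. The set $\mathcal{N}$ plays the role of a leaf node of a ball tree (BC-Tree) storing its centroid and, for each item, its distance to the centroid. *)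

From HB Require Import structures.
From mathcomp Require Import all_boot all_order all_algebra.
From mathcomp Require Import finmap.
Set Implicit Arguments. Unset Strict Implicit. Unset Printing Implicit Defensive.
Import Order.TTheory GRing.Theory Num.Theory.
Local Open Scope ring_scope.
Local Open Scope fset_scope.

Section Defs.
Variables (R : rcfType) (d : nat).

Definition dotp (u v : 'rV[R]_d) : R := \sum_(i < d) u 0 i * v 0 i.
Definition vnorm (u : 'rV[R]_d) : R := Num.sqrt (dotp u u).

Definition center (N : {fset 'rV[R]_d}) : 'rV[R]_d :=
  (#|` N|%:R)^-1 *: \sum_(p <- N) p.

(* maximum of <px,py> over pairs px <> py of S; 0 if there is no such pair *)
Definition pairvals (S : {fset 'rV[R]_d}) : seq R :=
  [seq dotp xy.1 xy.2 | xy <- [seq (x, y) | x <- S, y <- S] & xy.1 != xy.2].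
Definition maxpair (S : {fset 'rV[R]_d}) : R :=
  let vs := pairvals S in foldr Num.max (head 0 vs) vs.

Definition delta_avg (lam mu : R) (k : nat) (q p : 'rV[R]_d)
    (S : {fset 'rV[R]_d}) : R :=
  lam / k%:R * dotp p q
  - 2 * mu * (1 - lam) / (k%:R * (k%:R - 1)) * \sum_(p' <- S) dotp p p'.

Definition delta_max (lam mu : R) (k : nat) (q p : 'rV[R]_d)
    (S : {fset 'rV[R]_d}) : R :=
  lam / k%:R * dotp p q - mu * (1 - lam) * (maxpair (p |` S) - maxpair S).

End Defs.

From HB Require Import structures.
From mathcomp Require Import all_boot all_order all_algebra.
From mathcomp Require Import finmap ring.
Import Order.TTheory GRing.Theory Num.Theory.
Local Open Scope ring_scope.

(* Both marginal gains are the relevance term [lam / k * <p, q>] minus a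
   diversity penalty, and the penalty is nonnegative because all inner products
   among items are nonnegative (for [f_max] because the maximal pairwise inner
   product can only grow when [p] is added to [S]).  The relevance term is
   bounded by splitting [p = c + (p - c)] and applying Cauchy-Schwarz to
   [<p - c, q>]. *)

Section InnerProduct.
Variables (R : rcfType) (d : nat).
Implicit Types u v w : 'rV[R]_d.

Lemma dotpC u v : dotp u v = dotp v u.
Proof. by apply: eq_bigr => i _; rewrite mulrC. Qed.

Lemma dotpBl u v w : dotp (u - v) w = dotp u w - dotp v w.
Proof. by rewrite /dotp -sumrB; apply: eq_bigr => i _; rewrite !mxE mulrBl. Qed.

Lemma dotpp_ge0 u : 0 <= dotp u u.
Proof. by apply: sumr_ge0 => i _; rewrite -expr2 sqr_ge0. Qed.

Lemma dotp_lagrange u v :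
  \sum_(i < d) \sum_(j < d) (u 0 i * v 0 j - u 0 j * v 0 i) ^+ 2
  = 2 * (dotp u u * dotp v v - dotp u v ^+ 2).
Proof.
have sum_mul (a b : 'I_d -> R) :
    \sum_(i < d) \sum_(j < d) a i * b j = (\sum_i a i) * (\sum_j b j).
  by rewrite mulr_suml; apply: eq_bigr => i _; rewrite mulr_sumr.
have expand i j : (u 0 i * v 0 j - u 0 j * v 0 i) ^+ 2 =
    (u 0 i * u 0 i) * (v 0 j * v 0 j) + (v 0 i * v 0 i) * (u 0 j * u 0 j)
    - 2 * ((u 0 i * v 0 i) * (u 0 j * v 0 j)).
  by ring.
under eq_bigr => i _ do under eq_bigr => j _ do rewrite expand.
under eq_bigr => i _ do rewrite sumrB big_split /=.
rewrite sumrB big_split /= !sum_mul.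
under eq_bigr => i _ do rewrite -mulr_sumr.
by rewrite -mulr_sumr sum_mul /dotp; ring.
Qed.

Lemma dotp_le_vnorm u v : dotp u v <= vnorm u * vnorm v.
Proof.
have sq_le : dotp u v ^+ 2 <= dotp u u * dotp v v.
  rewrite -subr_ge0 -(@pmulr_rge0 _ 2) // -dotp_lagrange.
  by do 2 apply: sumr_ge0 => ? _; apply: sqr_ge0.
rewrite /vnorm -sqrtrM ?dotpp_ge0 //.
apply: le_trans (real_ler_norm (num_real _)) _.
by rewrite -sqrtr_sqr ler_sqrt // mulr_ge0 ?dotpp_ge0.
Qed.

Lemma dotp_le_shift u v w : dotp u v <= dotp v w + vnorm (u - w) * vnorm v.
Proof.
have -> : dotp u v = dotp w v + dotp (u - w) v by rewrite dotpBl addrC subrK.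
by rewrite (dotpC w) lerD2l dotp_le_vnorm.
Qed.

End InnerProduct.

Local Open Scope fset_scope.

Section MaxPair.
Variables (R : rcfType) (d : nat).
Implicit Types S T : {fset 'rV[R]_d}.

Lemma maxpairE S :
  maxpair S = \big[Num.max/head 0 (pairvals S)]_(z <- pairvals S) z.
Proof. exact: foldrE. Qed.

Lemma le_maxpair S z : z \in pairvals S -> z <= maxpair S.
Proof. by move=> zS; rewrite maxpairE; apply: le_bigmax_seq. Qed.

Lemma pairvals_subset {S T} : S `<=` T -> {subset pairvals S <= pairvals T}.
Proof.
move=> /fsubsetP ST z /mapP [[x y]] /=; rewrite mem_filter /= => /andP [xy].
case/allpairsP => [[x' y']] /= [xS yS [ex ey]] ->; subst x y.
apply/mapP; exists (x', y') => //; rewrite mem_filter /= xy /=.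
by apply/allpairsP; exists (x', y') => /=; rewrite !ST.
Qed.

Lemma pairvals_ge0 {S} :
  {in S &, forall x y, 0 <= dotp x y} -> {in pairvals S, forall z, 0 <= z}.
Proof.
move=> dotS z /mapP [[x y]] /=; rewrite mem_filter /= => /andP [_].
by case/allpairsP => [[x' y']] /= [xS yS [-> ->]] ->; apply: dotS.
Qed.

(* The maximum over no pair is [0], hence the sign hypotheses below. *)
Lemma maxpair_ge0 S : {in S &, forall x y, 0 <= dotp x y} -> 0 <= maxpair S.
Proof.
move=> dotS; case E: (pairvals S) (@le_maxpair S) => [|z s] le_max_S.
  by rewrite /maxpair E.
apply: le_trans (le_max_S z (mem_head z s)).
by apply: (pairvals_ge0 dotS z); rewrite E mem_head.
Qed.

Lemma maxpair_subset S T : S `<=` T ->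
  {in T &, forall x y, 0 <= dotp x y} -> maxpair S <= maxpair T.
Proof.
move=> ST dotT; have le_T z : z \in pairvals S -> z <= maxpair T.
  by move=> /(pairvals_subset ST); apply: le_maxpair.
rewrite maxpairE big_seq; apply: bigmax_le => [|z /le_T //].
case E: (pairvals S) => [|z s] /=; first exact: maxpair_ge0.
by rewrite le_T ?E ?mem_head.
Qed.

End MaxPair.

Section MarginalGain.
Variables (R : rcfType) (d : nat) (lam mu : R) (k : nat) (q p : 'rV[R]_d).
Hypotheses (mu_ge0 : 0 <= mu) (lam_le1 : lam <= 1).

Lemma delta_avg_le_dotp (S : {fset 'rV[R]_d}) :
  {in S, forall p', 0 <= dotp p p'} ->
  delta_avg lam mu k q p S <= lam / k%:R * dotp p q.
Proof.
move=> dotS; rewrite /delta_avg lerBlDr lerDl.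
have pairs_ge0 : 0 <= k%:R * (k%:R - 1) :> R.
  by case: k => [|n]; rewrite ?mul0r // -natr1 addrK mulr_ge0 ?addr_ge0.
apply: mulr_ge0; last by rewrite big_seq sumr_ge0.
by rewrite divr_ge0 // !mulr_ge0 ?subr_ge0.
Qed.

Lemma delta_max_le_dotp (S : {fset 'rV[R]_d}) :
  {in p |` S &, forall x y, 0 <= dotp x y} ->
  delta_max lam mu k q p S <= lam / k%:R * dotp p q.
Proof.
move=> dotpS; rewrite /delta_max lerBlDr lerDl.
by rewrite mulr_ge0 ?mulr_ge0 ?subr_ge0 ?maxpair_subset ?fsubsetU1.
Qed.

End MarginalGain.

Theorem corollary1 (R : rcfType) (d : nat) (P : {fset 'rV[R]_d}) (q : 'rV[R]_d)
    (k : nat) (lam mu : R)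
    (hk : (1 < k)%N) (hlam0 : 0 <= lam) (hlam1 : lam <= 1) (hmu : 0 < mu)
    (hpos : forall x y, x \in q |` P -> y \in q |` P -> 0 <= dotp x y)
    (N : {fset 'rV[R]_d}) (hNP : N `<=` P) (hN0 : N != fset0) :
  forall p, p \in N -> forall S : {fset 'rV[R]_d}, S `<=` P ->
    let c := center N in
    let bound := lam / k%:R * (dotp q c + vnorm (p - c) * vnorm q) in
    delta_avg lam mu k q p S <= bound /\ delta_max lam mu k q p S <= bound.
Proof.
move=> p pN S SP c bound.
have dotP : {in P &, forall x y, 0 <= dotp x y}.
  by move=> x y xP yP; apply: hpos; rewrite in_fset1U ?xP ?yP orbT.
have pP : p \in P by apply: (fsubsetP hNP).
have pSP : p |` S `<=` P by rewrite fsubUset fsub1set pP SP.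
have relevance_le : lam / k%:R * dotp p q <= bound.
  by rewrite ler_wpM2l ?divr_ge0 ?dotp_le_shift.
have mu_ge0 := ltW hmu.
split; apply: le_trans relevance_le.
- apply: delta_avg_le_dotp => // p' p'S.
  by apply: dotP; last exact: (fsubsetP SP).
- exact: delta_max_le_dotp (sub_in2 (fsubsetP pSP) dotP).
Qed.
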